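(* Let $S$ be a poset and let $S\otimes_i G_i$ and $S\otimes_i H_i$ be terminating ordered joins in the same shape $S$. Suppose $i_0\in S$ is a maximal element of $S$ and $G_i=H_i$ for all $i\neq i_0$. If $G_{i_0}\not\simeq_0 H_{i_0}$, then $S\otimes_i G_i \not\simeq_0 S\otimes_i H_i$. (Together with the special substitution theorem: $S\otimes_i G_i\simeq_0 S\otimes_i H_i$ if and only if $G_{i_0}\simeq_0 H_{i_0}$.)
   Context: All games are impartial combinatorial games under normal play; a game is determined by its set of options, and $G \to G'$ means $G'$ is an option of $G$. A game is terminating if it admits no infinite sequence of moves. $\mathbf{0}$ denotes the game with no options. The Grundy number of a terminating game $G$ is the ordinal $\Gamma_0(G)=\operatorname{mex}\{\Gamma_0(G') : G\to G'\}$, where $\operatorname{mex}\Lambda$ is the least ordinal not in the set of ordinals $\Lambda$. Games $G,H$ are $0$-equivalent, $G\simeq_0 H$, if $\Gamma_0(G)=\Gamma_0(H)$. Ordered join: for a poset $S$ and a family $(G_i)_{i\in S}$ of games, $S \otimes_i G_i$ is the game whose options are exactly the ordered joins $S \otimes_i G'_i$ obtained by choosing one $i_0\in S$ and an option $G_{i_0}\to G'_{i_0}$, and setting $G'_i=\mathbf{0}$ for all $i>i_0$ and $G'_i=G_i$ for all other $i\ne i_0$. *)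

From mathcomp Require Import all_boot all_order.
From Stdlib Require Import Relations.Relation_Operators.

Set Implicit Arguments.
Unset Strict Implicit.
Unset Printing Implicit Defensive.
Import Order.TTheory.
Local Open Scope order_scope.

(* Ordinals, represented as well-founded trees (Aczel/Brouwer style): *)
(* the tree OL I f stands for the ordinal sup_i (f i + 1).            *)
(* Comparison is by rank; oeq is equality of the represented ordinals. *)
Inductive Ord : Type := OL : forall I : Type, (I -> Ord) -> Ord.

Fixpoint ole (o p : Ord) {struct o} : Prop :=
  match o, p with
  | OL _ f, OL _ g => forall i, exists j, ole (f i) (g j)
  end.

Definition oeq (o p : Ord) : Prop := ole o p /\ ole p o.

(* A set of ordinals is given by a predicate A closed under oeq.
   alpha is the mex of A: the least ordinal not in A. *)
Definition is_mex (A : Ord -> Prop) (alpha : Ord) : Prop :=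
  ~ A alpha /\ forall beta, ~ A beta -> ole alpha beta.

(* Impartial games: positions of a game graph (P, mv); mv x y means    *)
(* y is an option of x.  A game is a position.                         *)
Section Games.
Variables (P : Type) (mv : P -> P -> Prop).

Definition terminating (x : P) : Prop := Acc (fun a b => mv b a) x.

Definition reach (x y : P) : Prop := clos_refl_trans P mv x y.

Definition option_values (gam : P -> Ord) (y : P) : Ord -> Prop :=
  fun beta => exists z, mv y z /\ oeq (gam z) beta.

Definition grundy_labeling (x : P) (gam : P -> Ord) : Prop :=
  forall y, reach x y -> is_mex (option_values gam y) (gam y).

Definition grundy (x : P) (alpha : Ord) : Prop :=
  exists gam, grundy_labeling x gam /\ oeq (gam x) alpha.
End Games.

Definition equiv0 (P1 P2 : Type) (mv1 : P1 -> P1 -> Prop) (mv2 : P2 -> P2 -> Prop)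
  (x : P1) (y : P2) : Prop :=
  exists alpha beta, grundy mv1 x alpha /\ grundy mv2 y beta /\ oeq alpha beta.

(* Ordered join.  A position of S (x)_i G_i is a family F : S -> option P,*)
(* where None stands for the game 0 and Some x for the game x.          *)
Section OrderedJoin.
Context {d : Order.disp_t} (S : porderType d) (P : Type) (mv : P -> P -> Prop).

Definition join_move (F F' : S -> option P) : Prop :=
  exists i0 : S, exists x x' : P,
    [/\ F i0 = Some x, mv x x', F' i0 = Some x',
        (forall i, i0 < i -> F' i = None)
      & (forall i, i != i0 -> ~~ (i0 < i) -> F' i = F i)].

Definition ojoin (G : S -> P) : S -> option P := fun i => Some (G i).
End OrderedJoin.

From mathcomp Require Import all_boot all_order.
From Stdlib Require Import Relations.Relation_Operators Wellfounded.Transitive_Closure.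
From Stdlib Require Import Classical FunctionalExtensionality.
Local Open Scope order_scope.
Set Implicit Arguments.
Unset Strict Implicit.

(* For the ordered join with i0 maximal, call two positions twins when they
   differ only at i0 and their i0-components have equal Grundy value.  By
   induction over the disjunctive sum of the two positions, twins have equal
   Grundy value (special substitution theorem): every option of one side is
   mirrored by an option of the other side of the same value, or itself has
   an option with the value of the other side.  Finally, if the
   i0-components have different values, say Gamma(G i0) < Gamma(H i0), then
   H i0 has an option of value Gamma(G i0); the corresponding option of the
   join of H is a twin of the join of G, so the two joins differ in value. *)

Definition olt (o p : Ord) : Prop := match p with OL _ g => exists j, ole o (g j) end.

Lemma ole_refl o : ole o o.
Proof. by elim: o => I f IH /= i; exists i. Qed.

Lemma ole_trans o p q : ole o p -> ole p q -> ole o q.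
Proof.
elim: o p q => I f IH [J g] [K h] /= opq pq i.
have [j fg] := opq i; have [k gh] := pq j.
by exists k; apply: IH fg gh.
Qed.

Lemma ole_OL I (f : I -> Ord) p : ole (OL f) p <-> forall i, olt (f i) p.
Proof. by case: p. Qed.

Lemma olt_ole_trans o p q : olt o p -> ole p q -> olt o q.
Proof.
case: p q => J g [K h] /= [j og] gh.
have [k gk] := gh j; exists k; exact: ole_trans og gk.
Qed.

Lemma olt_irrefl o : ~ olt o o.
Proof. by elim: o => I f IH /= [j /ole_OL /(_ j)]; apply: IH. Qed.

Lemma olt_or_ole_both q : forall p, (olt p q \/ ole q p) /\ (olt q p \/ ole p q).
Proof.
elim: q => J g IHq; elim=> I f IHp; split.
- case: (classic (exists j, ole (OL f) (g j))) => [lt|nlt]; [by left | right].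
  apply/ole_OL => j; have [_ [//|gf]] := IHq j (OL f).
  by case: nlt; exists j.
- case: (classic (exists i, ole (OL g) (f i))) => [lt|nlt]; [by left | right].
  apply/ole_OL => i; have [[//|fg] _] := IHp i.
  by case: nlt; exists i.
Qed.

Lemma olt_or_ole p q : olt p q \/ ole q p.
Proof. exact: (olt_or_ole_both q p).1. Qed.

Lemma oeq_refl o : oeq o o.
Proof. by split; apply: ole_refl. Qed.

Lemma oeq_sym o p : oeq o p -> oeq p o.
Proof. by case. Qed.

Lemma oeq_trans o p q : oeq o p -> oeq p q -> oeq o q.
Proof. by case=> op po [pq qp]; split; [apply: ole_trans op pq | apply: ole_trans qp po]. Qed.

Lemma olt_cases o p : ~ oeq o p -> olt o p \/ olt p o.
Proof.
move=> neq; case: (olt_or_ole o p) => [|po]; first by left.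
case: (olt_or_ole p o) => [|op]; first by right.
by case: neq.
Qed.

Lemma mex_below A m b : is_mex A m -> olt b m -> A b.
Proof.
case=> _ least bm; apply: NNPP => nAb.
exact: olt_irrefl (olt_ole_trans bm (least b nAb)).
Qed.

Lemma mex_uniq A B m m' : is_mex A m -> is_mex B m' ->
  (forall b, A b -> B b) -> (forall b, B b -> A b) -> oeq m m'.
Proof.
case=> nAm leastA [nBm' leastB] AB BA; split.
- by apply: leastA => /AB.
- by apply: leastB => /BA.
Qed.

Lemma is_mex_ext A B m : (forall b, A b <-> B b) -> is_mex A m -> is_mex B m.
Proof.
move=> AB [nAm least]; split; first by move/AB.
by move=> b nBb; apply: least => /AB.
Qed.

(* Every family of ordinals has a mex: the supremum of those members
   below which no value is missing from the family. *)
Section Mex.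
Variables (I : Type) (f : I -> Ord).

Definition attained (b : Ord) : Prop := exists i, oeq (f i) b.

Definition gap_free (i : I) : Prop := forall b, olt b (f i) -> attained b.

Definition omex : Ord := @OL {i | gap_free i} (fun w => f (sval w)).

Lemma below_omex b : olt b omex -> attained b.
Proof.
case=> -[i gfi] /= bfi.
case: (olt_or_ole b (f i)) => [|fib]; first exact: gfi.
by exists i; split.
Qed.

Lemma omex_spec : is_mex attained omex.
Proof.
split.
- move=> [j [fjm mfj]].
  have gfj : gap_free j by move=> b bfj; apply: below_omex (olt_ole_trans bfj fjm).
  apply: (@olt_irrefl (f j)); apply: olt_ole_trans mfj.
  by exists (exist _ j gfj); apply: ole_refl.
- move=> b nAb; apply/ole_OL => -[i gfi] /=.
  case: (olt_or_ole (f i) b) => [//|bfi].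
  case: (olt_or_ole b (f i)) => [/gfi //|fib].
  by case: nAb; exists i; split.
Qed.
End Mex.

(* The canonical Grundy labeling of an arbitrary game graph, defined by
   well-founded recursion along moves into terminating positions. *)
Section GrundyLabel.
Variables (P : Type) (mv : P -> P -> Prop).

Lemma term_step x y : terminating mv x -> mv x y -> terminating mv y.
Proof. by move=> Tx xy; apply: (Acc_inv Tx xy). Qed.

Lemma term_reach x y : terminating mv x -> reach mv x y -> terminating mv y.
Proof.
move=> Tx xy; elim: xy Tx => [a b ab Ta | // | a b c _ IHab _ IHbc Ta].
- exact: term_step Ta ab.
- exact: IHbc (IHab Ta).
Qed.

Definition term_option (y z : P) : Prop := mv z y /\ terminating mv z.

Lemma term_option_wf : well_founded term_option.
Proof.
move=> z; case: (classic (terminating mv z)) => [Tz|nTz]; last first.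
  by constructor=> y [_ Tz].
by elim: Tz => {}z _ IH; constructor=> y [zy _]; apply: IH.
Qed.

Definition lab : P -> Ord :=
  Fix term_option_wf (fun _ => Ord)
    (fun z rec => omex (fun w : {y | term_option y z} => rec (sval w) (svalP w))).

Lemma lab_eq z : lab z = omex (fun w : {y | term_option y z} => lab (sval w)).
Proof.
rewrite /lab Fix_eq // => y rec1 rec2 rec12.
by congr omex; apply: functional_extensionality => w; apply: rec12.
Qed.

Lemma lab_mex z : terminating mv z -> is_mex (option_values mv lab z) (lab z).
Proof.
move=> Tz; rewrite [lab z]lab_eq; apply: is_mex_ext (omex_spec _) => b; split.
- by case=> w e; exists (sval w); split; [case: (svalP w) |].
- by case=> y [zy e]; exists (exist _ y (conj zy Tz)).
Qed.

Lemma grundy_labeling_option (gam : P -> Ord) z y :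
  mv z y -> grundy_labeling mv z gam -> grundy_labeling mv y gam.
Proof. by move=> zy L w yw; apply: L (rt_trans _ _ _ _ _ (rt_step _ _ _ _ zy) yw). Qed.

Lemma grundy_labelings_agree (gam1 gam2 : P -> Ord) z : terminating mv z ->
  grundy_labeling mv z gam1 -> grundy_labeling mv z gam2 -> oeq (gam1 z) (gam2 z).
Proof.
move=> Tz; elim: Tz => {}z _ IH L1 L2.
have IHy y (zy : mv z y) : oeq (gam1 y) (gam2 y).
  exact: IH zy (grundy_labeling_option zy L1) (grundy_labeling_option zy L2).
apply: mex_uniq (L1 z (rt_refl _ _ _)) (L2 z (rt_refl _ _ _)) _ _ => b [y [zy e]];
  exists y; split=> //.
- exact: oeq_trans (oeq_sym (IHy y zy)) e.
- exact: oeq_trans (IHy y zy) e.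
Qed.

Lemma grundy_lab x alpha : terminating mv x -> grundy mv x alpha <-> oeq (lab x) alpha.
Proof.
move=> Tx; have L : grundy_labeling mv x lab by move=> y xy; apply: lab_mex (term_reach Tx xy).
split; last by exists lab.
by case=> gam [Lgam e]; apply: oeq_trans (grundy_labelings_agree Tx L Lgam) e.
Qed.
End GrundyLabel.

Lemma equiv0_lab (P1 P2 : Type) (mv1 : P1 -> P1 -> Prop) (mv2 : P2 -> P2 -> Prop) x y :
  terminating mv1 x -> terminating mv2 y ->
  equiv0 mv1 mv2 x y <-> oeq (lab mv1 x) (lab mv2 y).
Proof.
move=> Tx Ty; split.
- case=> a [b [/(grundy_lab _ Tx) xa [/(grundy_lab _ Ty) yb ab]]].
  exact: oeq_trans xa (oeq_trans ab (oeq_sym yb)).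
- move=> e; exists (lab mv1 x), (lab mv2 y).
  by split; [|split]; [apply/grundy_lab/oeq_refl | apply/grundy_lab/oeq_refl |].
Qed.

(* The disjunctive sum of two games: a move is a move in one component.
   Its proper descendants give the induction order for pairs of games. *)
Section DisjunctiveSum.
Variables (A B : Type) (mA : A -> A -> Prop) (mB : B -> B -> Prop).

Definition sum_move (p q : A * B) : Prop :=
  (mA p.1 q.1 /\ p.2 = q.2) \/ (p.1 = q.1 /\ mB p.2 q.2).

Definition sum_below : A * B -> A * B -> Prop :=
  clos_trans _ (fun q p => sum_move p q).

Lemma sum_terminating a b :
  terminating mA a -> terminating mB b -> terminating sum_move (a, b).
Proof.
move=> Ta; elim: Ta b => {}a _ IHa b Tb; elim: Tb => {}b Tb IHb.
constructor=> -[a' b'] [[/= aa' <-]|[/= <- bb']]; last exact: IHb.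
by apply: IHa => //; constructor.
Qed.

Lemma sum_below_wf a b :
  terminating mA a -> terminating mB b -> Acc sum_below (a, b).
Proof. by move=> Ta Tb; apply/Acc_clos_trans/sum_terminating. Qed.

Lemma sum_below_left a a' b : mA a a' -> sum_below (a', b) (a, b).
Proof. by move=> aa'; apply: t_step; left. Qed.

Lemma sum_below_right a b b' : mB b b' -> sum_below (a, b') (a, b).
Proof. by move=> bb'; apply: t_step; right. Qed.

Lemma sum_below_reach q p : sum_below q p -> reach mA p.1 q.1 /\ reach mB p.2 q.2.
Proof.
elim=> {p q} [q p [[pq <-]|[<- pq]] | r q p _ [rq1 rq2] _ [qp1 qp2]].
- by split; [apply: rt_step | apply: rt_refl].
- by split; [apply: rt_refl | apply: rt_step].
- by split; [apply: rt_trans qp1 rq1 | apply: rt_trans qp2 rq2].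
Qed.
End DisjunctiveSum.

Lemma sum_below_swap (A : Type) (m : A -> A -> Prop) q p :
  sum_below m m q p -> sum_below m m (q.2, q.1) (p.2, p.1).
Proof.
elim=> {p q} [q p [[pq eq]|[eq pq]] | r q p _ rq _ qp]; last exact: t_trans rq qp.
- by apply: t_step; right.
- by apply: t_step; left.
Qed.

Section SubstitutionAtMaximal.
Context {d : Order.disp_t} (S : porderType d) (P : Type) (mv : P -> P -> Prop) (i0 : S).
Hypothesis i0_max : forall j : S, ~ (i0 < j).

Local Notation pos := (S -> option P).
Local Notation JM := (join_move mv).

Definition upd (X : pos) (v : P) : pos := fun i => if i == i0 then Some v else X i.

Definition agree_off (X Y : pos) : Prop := forall i, i != i0 -> X i = Y i.

Definition twins (X Y : pos) : Prop :=
  exists x y, [/\ X i0 = Some x, Y i0 = Some y, agree_off X Y & oeq (lab mv x) (lab mv y)].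

Lemma upd_i0 X v : upd X v i0 = Some v.
Proof. by rewrite /upd eqxx. Qed.

Lemma agree_off_upd X v : agree_off X (upd X v).
Proof. by move=> i /negbTE; rewrite /upd => ->. Qed.

Lemma agree_off_sym X Y : agree_off X Y -> agree_off Y X.
Proof. by move=> XY i /XY. Qed.

Lemma agree_off_trans X Y Z : agree_off X Y -> agree_off Y Z -> agree_off X Z.
Proof. by move=> XY YZ i ni; rewrite XY ?YZ. Qed.

Lemma twins_sym X Y : twins X Y -> twins Y X.
Proof.
case=> x [y [Xx Yy XY e]]; exists y, x.
by split=> //; [apply: agree_off_sym | apply: oeq_sym].
Qed.

(* Since nothing lies above i0, a move in component i0 resets nothing. *)
Lemma move_at_max X x v : X i0 = Some x -> mv x v -> JM X (upd X v).
Proof.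
move=> Xx xv; exists i0, x, v; split=> //; first exact: upd_i0.
- by move=> i /i0_max.
- by move=> i ni _; rewrite (agree_off_upd X v ni).
Qed.

Lemma term_component X x : terminating JM X -> X i0 = Some x -> terminating mv x.
Proof.
move=> TX; elim: TX x => {}X _ IH x Xx; constructor=> v xv.
exact: IH (move_at_max Xx xv) _ (upd_i0 X v).
Qed.

(* The three kinds of moves of an ordered join, seen from component i0:
   a move in i0 itself, a move below i0 (which resets i0 and can therefore be
   made from any Y agreeing with X off i0), and a move elsewhere (which keeps
   i0 and can be copied to Y). *)
Lemma join_move_cases X X' : JM X X' ->
  [\/ exists x x', [/\ X i0 = Some x, mv x x', X' i0 = Some x' & agree_off X' X],
      forall Y, agree_off X Y -> JM Y X'
    | X' i0 = X i0 /\ forall Y y, agree_off X Y -> Y i0 = Some y -> JM Y (upd X' y)].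
Proof.
case=> k [x [x' [Xk xx' X'k reset keep]]].
case: (eqVneq k i0) => [ki0|nki0]; first subst k.
  apply: Or31; exists x, x'; split=> // i ni.
  by rewrite keep //; apply/negP; apply: i0_max.
case: (boolP (k < i0)) => [lt_k|nlt_k].
- apply: Or32 => Y XY; exists k, x, x'; split=> //; first by rewrite -XY.
  move=> i nik nlt; rewrite keep // XY //.
  by apply: contraNneq nlt => ->.
- have X'i0 : X' i0 = X i0 by apply: keep; rewrite // eq_sym.
  apply: Or33; split=> // Y y XY Yy; exists k, x, x'; split=> //.
  + by rewrite -XY.
  + by rewrite -(agree_off_upd X' y nki0).
  + move=> i lt_i; rewrite /upd; case: eqP => [ii0|_]; last exact: reset.
    by rewrite -ii0 lt_i in nlt_k.
  + move=> i nik nlt; rewrite /upd; case: eqP => [->|/eqP ni]; first by [].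
    by rewrite keep // XY.
Qed.

Local Notation labJ := (lab JM).
Local Notation below := (sum_below JM JM).

(* The induction hypothesis of the substitution theorem at (X, Y). *)
Definition substitution_below (X Y : pos) : Prop :=
  forall X1 Y1, below (X1, Y1) (X, Y) -> twins X1 Y1 -> oeq (labJ X1) (labJ Y1).

(* An option X' of X does not carry the value of Y: either Y has an option
   with the value of X', or X' has an option with the value of Y. *)
Definition mirrored (Y X' : pos) : Prop :=
  (exists Y', JM Y Y' /\ oeq (labJ X') (labJ Y')) \/
  (exists X'', JM X' X'' /\ oeq (labJ X'') (labJ Y)).

(* A move in component i0 is answered by the mex property of the components:
   a smaller value is matched by an option of y, a larger one is brought back
   to the value of x by an option of x'. *)
Lemma mirror_max_move X Y X' x y x' : substitution_below X Y ->
  terminating JM X -> terminating JM Y ->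
  X i0 = Some x -> Y i0 = Some y -> agree_off X Y -> oeq (lab mv x) (lab mv y) ->
  JM X X' -> mv x x' -> X' i0 = Some x' -> agree_off X' X -> mirrored Y X'.
Proof.
move=> IH TX TY Xx Yy XY exy XX' xx' X'x' X'X.
have Tx := term_component TX Xx; have Ty := term_component TY Yy.
case: (olt_or_ole (lab mv x') (lab mv x)) => [lt_x'|le_x].
  have [y' [yy' ey']] := mex_below (lab_mex Ty) (olt_ole_trans lt_x' exy.1).
  have YY' := move_at_max Yy yy'.
  left; exists (upd Y y'); split=> //; apply: IH.
    exact: t_trans (sum_below_left _ _ XX') (sum_below_right _ _ YY').
  exists x', y'; split=> //; first exact: upd_i0.
    exact: agree_off_trans X'X (agree_off_trans XY (agree_off_upd Y y')).
  exact: oeq_sym ey'.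
case: (olt_or_ole (lab mv x) (lab mv x')) => [lt_x|le_x'].
  have [x'' [x'x'' ex'']] := mex_below (lab_mex (term_step Tx xx')) lt_x.
  have X'X'' := move_at_max X'x' x'x''.
  right; exists (upd X' x''); split=> //; apply: IH.
    exact: t_trans (sum_below_left _ _ X'X'') (sum_below_left _ _ XX').
  exists x'', y; split=> //; first exact: upd_i0.
    exact: agree_off_trans (agree_off_sym (agree_off_upd X' x'')) (agree_off_trans X'X XY).
  exact: oeq_trans ex'' exy.
by case: (lab_mex Tx).1; exists x'; split=> //; split.
Qed.

Lemma mirror_option X Y X' : substitution_below X Y ->
  terminating JM X -> terminating JM Y -> twins X Y -> JM X X' -> mirrored Y X'.
Proof.
move=> IH TX TY [x [y [Xx Yy XY exy]]] XX'.
case: (join_move_cases XX') => [[x1 [x' [Xx1 x1x' X'x' X'X]]] | toY | [X'i0 toY]].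
- move: x1x'; rewrite Xx in Xx1; case: Xx1 => <- xx'.
  exact: mirror_max_move IH TX TY Xx Yy XY exy XX' xx' X'x' X'X.
- by left; exists X'; split; [apply: toY | apply: oeq_refl].
- left; exists (upd X' y); split; first exact: toY XY Yy.
  apply: IH.
    exact: t_trans (sum_below_left _ _ XX') (sum_below_right _ _ (toY _ _ XY Yy)).
  exists x, y; split=> //; [by rewrite X'i0 | exact: upd_i0 | exact: agree_off_upd].
Qed.

(* One half of the substitution step: no option of X has the value of Y,
   so by minimality of the mex, labJ X <= labJ Y. *)
Lemma substitution_half X Y : substitution_below X Y ->
  terminating JM X -> terminating JM Y -> twins X Y -> ole (labJ X) (labJ Y).
Proof.
move=> IH TX TY XY; apply: (lab_mex TX).2 => -[X' [XX' eX']].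
case: (mirror_option IH TX TY XY XX') => [[Y' [YY' eY']] | [X'' [X'X'' eX'']]].
- by case: (lab_mex TY).1; exists Y'; split; last exact: oeq_trans (oeq_sym eY') eX'.
- case: (lab_mex (term_step TX XX')).1; exists X''; split=> //.
  exact: oeq_trans eX'' (oeq_sym eX').
Qed.

Theorem substitution X Y :
  terminating JM X -> terminating JM Y -> twins X Y -> oeq (labJ X) (labJ Y).
Proof.
suff ind p : Acc below p -> terminating JM p.1 -> terminating JM p.2 ->
    twins p.1 p.2 -> oeq (labJ p.1) (labJ p.2).
  by move=> TX TY; apply: ind (sum_below_wf TX TY) TX TY.
clear X Y; elim=> {p} -[X Y] _ IH /= TX TY XY.
have IHb : substitution_below X Y.
  move=> X1 Y1 below1; have [/= rX rY] := sum_below_reach below1.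
  exact: IH below1 (term_reach TX rX) (term_reach TY rY).
split; first exact: substitution_half IHb TX TY XY.
apply: substitution_half TY TX (twins_sym XY) => Y1 X1 below1 YX1.
by apply/oeq_sym/IHb; [apply: sum_below_swap below1 | apply: twins_sym].
Qed.

(* Strict converse: if the component of X at i0 has smaller Grundy value than
   that of Y, then Y has an option twin to X, so X and Y differ in value. *)
Lemma substitution_strict X Y x y :
  terminating JM X -> terminating JM Y -> X i0 = Some x -> Y i0 = Some y ->
  agree_off X Y -> olt (lab mv x) (lab mv y) -> ~ oeq (labJ X) (labJ Y).
Proof.
move=> TX TY Xx Yy XY lt_xy eXY.
have [y' [yy' ey']] := mex_below (lab_mex (term_component TY Yy)) lt_xy.
have YY' := move_at_max Yy yy'.
have eXY' : oeq (labJ X) (labJ (upd Y y')).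
  apply: substitution TX (term_step TY YY') _.
  exists x, y'; split=> //; first exact: upd_i0.
    exact: agree_off_trans XY (agree_off_upd Y y').
  exact: oeq_sym ey'.
case: (lab_mex TY).1; exists (upd Y y'); split=> //.
exact: oeq_trans (oeq_sym eXY') eXY.
Qed.
End SubstitutionAtMaximal.

Theorem mainTheorem4 {d : Order.disp_t} (S : porderType d) (P : Type)
  (mv : P -> P -> Prop) (G H : S -> P) (i0 : S) :
  terminating (join_move mv) (ojoin G) ->
  terminating (join_move mv) (ojoin H) ->
  (forall j : S, ~ (i0 < j)) ->
  (forall i : S, i != i0 -> G i = H i) ->
  ~ equiv0 mv mv (G i0) (H i0) ->
  ~ equiv0 (join_move mv) (join_move mv) (ojoin G) (ojoin H).
Proof.
move=> TG TH i0_max GH neq.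
have TGi0 := term_component i0_max TG (erefl (Some (G i0))).
have THi0 := term_component i0_max TH (erefl (Some (H i0))).
have GHoff : agree_off i0 (ojoin G) (ojoin H) by move=> i ni; rewrite /ojoin GH.
rewrite (equiv0_lab TG TH) => eGH.
have [lt_GH | lt_HG] :
    olt (lab mv (G i0)) (lab mv (H i0)) \/ olt (lab mv (H i0)) (lab mv (G i0)).
  by apply: olt_cases => e; apply: neq; apply/equiv0_lab.
- exact (substitution_strict i0_max TG TH (erefl _) (erefl _) GHoff lt_GH eGH).
- exact (substitution_strict i0_max TH TG (erefl _) (erefl _)
           (agree_off_sym GHoff) lt_HG (oeq_sym eGH)).
Qed.
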